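(* Let $\mathcal{K}$ be a closed convex cone in a finite-dimensional Euclidean space with $\dim\mathcal{K}>1$. Then there exists $\alpha>-1$ such that $$\sup_{y\in\mathcal{K},\ \|y\|=1}\langle x,y\rangle\ge\alpha\quad\text{for all }x\in\operatorname{span}\mathcal{K}\text{ with }\|x\|=1.$$ *)

From HB Require Import structures.
From mathcomp Require Import all_boot all_order all_algebra.
From mathcomp Require Import all_classical all_reals all_analysis.
Set Implicit Arguments. Unset Strict Implicit. Unset Printing Implicit Defensive.
Import Order.TTheory GRing.Theory Num.Theory.
Import numFieldNormedType.Exports.
Local Open Scope classical_set_scope.
Local Open Scope ring_scope.

Definition dotv {R : realType} {n : nat} (u v : 'rV[R]_n) : R :=
  \sum_(i < n) u 0 i * v 0 i.
Definition enorm {R : realType} {n : nat} (u : 'rV[R]_n) : R :=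
  Num.sqrt (dotv u u).

Definition is_cone {R : realType} {n : nat} (K : set 'rV[R]_n) : Prop :=
  forall x t, K x -> 0 <= t -> K (t *: x).
Definition is_convex_set {R : realType} {n : nat} (K : set 'rV[R]_n) : Prop :=
  forall x y t, K x -> K y -> 0 <= t <= 1 -> K (t *: x + (1 - t) *: y).

Definition lin_span {R : realType} {n : nat} (K : set 'rV[R]_n) : set 'rV[R]_n :=
  [set x | exists (m : nat) (k : 'I_m -> 'rV[R]_n) (c : 'I_m -> R),
      (forall i, K (k i)) /\ x = \sum_(i < m) c i *: k i].

(* dim K (:= dim span K) >= d : span K contains d linearly independent vectors *)
Definition dim_ge {R : realType} {n : nat} (K : set 'rV[R]_n) (d : nat) : Prop :=
  exists M : 'M[R]_(d, n), (forall i, lin_span K (row i M)) /\ \rank M = d.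

(* Two distinct unit vectors a, b of K suffice.  For a unit vector x the
   supremum dominates the mean of <x, a> and <x, b>, i.e. <x, m> with
   m = (a + b) / 2, and 2 <x, m> >= - (|x|^2 + |m|^2) = - (1 + |m|^2), while
   |m|^2 = 1 - |a - b|^2 / 4 < 1 by the parallelogram law; so
   alpha := - (1 + |m|^2) / 2 > -1 works for every x.  Such a and b exist
   because a cone with a single unit vector lies on a line, whose span has
   dimension at most 1. *)
From HB Require Import structures.
From mathcomp Require Import all_boot all_order all_algebra.
From mathcomp Require Import all_classical all_reals all_analysis.
From mathcomp Require Import ring lra.
Import Order.TTheory GRing.Theory Num.Theory.
Import numFieldNormedType.Exports.
Local Open Scope classical_set_scope.
Local Open Scope ring_scope.

Section EuclideanRows.
Context {R : realType} {n : nat}.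
Implicit Types (u v w : 'rV[R]_n).

Lemma dotv_ge0 u : 0 <= dotv u u.
Proof. by apply: sumr_ge0 => i _; rewrite -expr2 sqr_ge0. Qed.

Lemma dotv_eq0 u : (dotv u u == 0) = (u == 0).
Proof.
apply/eqP/eqP => [u0|->]; last by rewrite /dotv big1 // => i _; rewrite mxE mul0r.
apply/rowP => j; rewrite mxE; apply/eqP.
have /eqP := psumr_eq0P (fun i _ => sqr_ge0 (u 0 i)) u0 (i := j) isT.
by rewrite mulf_eq0 orbb.
Qed.

Lemma dotvDr u v w : dotv u (v + w) = dotv u v + dotv u w.
Proof. by rewrite /dotv -big_split; apply: eq_bigr => i _; rewrite mxE mulrDr. Qed.

Lemma dotvZr u a v : dotv u (a *: v) = a * dotv u v.
Proof. by rewrite /dotv mulr_sumr; apply: eq_bigr => i _; rewrite mxE mulrCA. Qed.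

Lemma dotvZl u a v : dotv (a *: u) v = a * dotv u v.
Proof. by rewrite /dotv mulr_sumr; apply: eq_bigr => i _; rewrite mxE mulrA. Qed.

Lemma dotv_le_mean u v : 2 * dotv u v <= dotv u u + dotv v v.
Proof.
rewrite /dotv mulr_sumr -big_split; apply: ler_sum => i _ /=.
by have := sqr_ge0 (u 0 i - v 0 i); nra.
Qed.

Lemma dotv_ge_mean u v : - (dotv u u + dotv v v) <= 2 * dotv u v.
Proof.
have := dotv_le_mean u (- v).
by rewrite -scaleN1r dotvZr dotvZl dotvZr !mulN1r opprK; lra.
Qed.

Lemma dotv_parallelogram u v :
  dotv (u + v) (u + v) + dotv (u - v) (u - v) = 2 * dotv u u + 2 * dotv v v.
Proof.
rewrite /dotv -big_split !mulr_sumr -big_split; apply: eq_bigr => i _.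
by rewrite !mxE /=; ring.
Qed.

Lemma enorm_sqr u : enorm u ^+ 2 = dotv u u.
Proof. by rewrite sqr_sqrtr // dotv_ge0. Qed.

Lemma enorm_gt0 u : (0 < enorm u) = (u != 0).
Proof. by rewrite sqrtr_gt0 lt_def dotv_ge0 dotv_eq0 andbT. Qed.

Lemma enorm_normalize u : u != 0 -> enorm ((enorm u)^-1 *: u) = 1.
Proof.
rewrite -enorm_gt0 => /gt_eqF/negbT u0.
rewrite {1}/enorm dotvZl dotvZr -enorm_sqr mulrA -expr2 -exprMn mulVf //.
by rewrite expr1n sqrtr1.
Qed.

Lemma dotv_enorm1 u : enorm u = 1 -> dotv u u = 1.
Proof. by move=> u1; rewrite -enorm_sqr u1 expr1n. Qed.

Lemma midpoint_dotv_lt1 u v : enorm u = 1 -> enorm v = 1 -> u != v ->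
  dotv (2^-1 *: (u + v)) (2^-1 *: (u + v)) < 1.
Proof.
move=> /dotv_enorm1 uu /dotv_enorm1 vv uv.
have : 0 < dotv (u - v) (u - v) by rewrite lt_def dotv_ge0 dotv_eq0 subr_eq0 uv.
by have := dotv_parallelogram u v; rewrite dotvZl dotvZr uu vv; lra.
Qed.

Lemma sup_dotv_ge_midpoint (S : set 'rV[R]_n) x a b :
  (forall y, S y -> enorm y = 1) -> enorm x = 1 -> S a -> S b ->
  - (1 + dotv (2^-1 *: (a + b)) (2^-1 *: (a + b))) / 2
    <= sup [set dotv x y | y in S].
Proof.
move=> S1 /dotv_enorm1 xx Sa Sb.
have ubS : has_ubound [set dotv x y | y in S].
  exists 1 => _ [y Sy <-].
  by have := dotv_le_mean x y; rewrite xx dotv_enorm1 ?S1 //; lra.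
have le_sup y : S y -> dotv x y <= sup [set dotv x y | y in S].
  by move=> Sy; apply: ub_le_sup => //; exists y.
have := dotv_ge_mean x (2^-1 *: (a + b)); rewrite xx [dotv x _]dotvZr dotvDr.
by have := le_sup a Sa; have := le_sup b Sb; lra.
Qed.

End EuclideanRows.

Definition unit_vectors {R : realType} {n : nat} (K : set 'rV[R]_n) :=
  [set y | K y /\ enorm y = 1].

Lemma lin_span_sub_line (R : realType) (n : nat) (K : set 'rV[R]_n) a :
  (forall u, K u -> exists t, u = t *: a) ->
  forall x, lin_span K x -> exists t, x = t *: a.
Proof.
move=> Kline x [m [k [c [Kk ->]]]].
have /choice[t tE] : forall j, exists t, k j = t *: a by move=> j; exact: Kline.
exists (\sum_(j < m) c j * t j); rewrite scaler_suml.
by apply: eq_bigr => j _; rewrite tE scalerA.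
Qed.

Lemma rank_rows_sub_line (R : fieldType) (m n : nat) (M : 'M[R]_(m, n)) a :
  (forall i, exists t, row i M = t *: a) -> (\rank M <= 1)%N.
Proof.
move=> Mline; apply: leq_trans (rank_leq_row a).
by apply/mxrankS/row_subP => i; apply/sub_rVP.
Qed.

Section Cones.
Context {R : realType} {n : nat} {K : set 'rV[R]_n}.
Hypothesis Kcone : is_cone K.

Lemma cone_unit_direction u : K u -> u != 0 ->
  exists2 v, unit_vectors K v & u = enorm u *: v.
Proof.
move=> Ku u0; exists ((enorm u)^-1 *: u).
  by split; [apply: Kcone; rewrite // invr_ge0 sqrtr_ge0 | exact: enorm_normalize].
by rewrite scalerA divff ?scale1r // lt0r_neq0 ?enorm_gt0.
Qed.

Lemma cone_sub_line : (forall v w, unit_vectors K v -> unit_vectors K w -> v = w) ->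
  exists a, forall u, K u -> exists t, u = t *: a.
Proof.
move=> unit_uniq.
case: (pselect (exists u, K u /\ u != 0)) => [[w [Kw w0]]|K0].
  have [a Ua _] := cone_unit_direction _ Kw w0.
  exists a => u Ku; have [->|u0] := eqVneq u 0; first by exists 0; rewrite scale0r.
  by have [v Uv ->] := cone_unit_direction _ Ku u0; exists (enorm u); rewrite (unit_uniq v a).
exists 0 => u Ku; exists 0; rewrite scaler0.
by have [//|u0] := eqVneq u 0; case: K0; exists u.
Qed.

Lemma cone_two_unit_vectors : dim_ge K 2 ->
  exists a b, [/\ unit_vectors K a, unit_vectors K b & a != b].
Proof.
move=> [M [Mspan rkM]]; apply: contrapT => no_two.
have [a Kline] : exists a, forall u, K u -> exists t, u = t *: a.
  apply: cone_sub_line => v w Uv Uw.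
  by have [//|vw] := eqVneq v w; case: no_two; exists v, w.
suff : (\rank M <= 1)%N by rewrite rkM.
apply: (@rank_rows_sub_line _ _ _ _ a) => i.
exact: lin_span_sub_line Kline _ (Mspan i).
Qed.

End Cones.

Theorem proposition4p3 (R : realType) (n : nat) (K : set 'rV[R]_n)
  (Kclosed : closed K) (Kcone : is_cone K) (Kconv : is_convex_set K)
  (Kdim : dim_ge K 2) :
  exists alpha : R, -1 < alpha /\
    forall x : 'rV[R]_n, lin_span K x -> enorm x = 1 ->
      alpha <= sup [set dotv x y | y in [set y | K y /\ enorm y = 1]].
Proof.
have [a [b [Ua Ub ab]]] := cone_two_unit_vectors Kcone Kdim.
exists (- (1 + dotv (2^-1 *: (a + b)) (2^-1 *: (a + b))) / 2); split.
  by have := midpoint_dotv_lt1 a b Ua.2 Ub.2 ab; lra.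
by move=> x _ x1; apply: sup_dotv_ge_midpoint => // y [].
Qed.
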